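(* Let $X\subseteq\mathbb{C}^n$ be a complex analytic set and $\mathcal M\subseteq\mathcal O_X^p$ a sheaf of $\mathcal O_X$-submodules. Then: (1) $\mathcal M_{S_1}$ is an $\mathcal O_X$-submodule of $\mathcal O_X^p$, i.e. for every $x\in X$, $(\mathcal M_{S_1})_x$ is an $\mathcal O_{X,x}$-submodule of $\mathcal O_{X,x}^p$; (2) for every $x\in X$, $\mathcal M_x\subseteq(\mathcal M_{S_1})_x\subseteq\overline{\mathcal M_x}$.
   Context: $X\subseteq\mathbb{C}^n$ is a complex analytic set with coordinates $z_1,\dots,z_n$, and $\pi_1,\pi_2:X\times X\to X$ are the two projections. For $h\in\mathcal O_X^p$ the double of $h$ is $h_D=(h\circ\pi_1,h\circ\pi_2)\in\mathcal O_{X\times X}^{2p}$. The double $\mathcal M_D$ of $\mathcal M\subseteq\mathcal O_X^p$ is the $\mathcal O_{X\times X}$-submodule of $\mathcal O_{X\times X}^{2p}$ generated by $\{h_D: h\in\mathcal M\}$. $\overline N$ denotes the integral closure of a submodule $N$ of a free module over the local ring of an analytic space; by the curve criterion, $h\in\overline N$ at a point iff $\phi^*h\in\phi^*N$ for every analytic curve germ $\phi:(\mathbb C,0)\to$ (space, point). The 1-Lipschitz saturation is $(\mathcal M_{S_1})_x=\{h\in\mathcal O_{X,x}^p: h_D\in\overline{\mathcal M_D}\text{ at }(x,x)\}$. *)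

From HB Require Import structures.
From mathcomp Require Import all_boot all_order all_algebra.
From mathcomp Require Import reals complex.
Set Implicit Arguments. Unset Strict Implicit. Unset Printing Implicit Defensive.
Import Order.TTheory GRing.Theory Num.Theory.
Local Open Scope ring_scope.
Local Open Scope complex_scope.

Section Analytic.
Variable R : realType.
Local Notation C := (R[i]).

Definition polydisc (I : finType) (a : I -> C) (d : C) (w : I -> C) : Prop :=
  forall i, `|w i - a i| < d.

Definition cdiff_at (I : finType) (f : (I -> C) -> C) (z : I -> C) : Prop :=
  exists c : I -> C, forall e : C, 0 < e -> exists d : C, 0 < d /\
    forall h : I -> C, (forall i, `|h i| < d) ->
      `|f (fun i => z i + h i) - f z - \sum_i c i * h i| <= e * \sum_i `|h i|.

(* f is holomorphic on a neighbourhood of z (a representative of an element of O_{C^I,z}) *)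
Definition holo_near (I : finType) (f : (I -> C) -> C) (z : I -> C) : Prop :=
  exists d : C, 0 < d /\ forall w, polydisc z d w -> cdiff_at f w.

Definition holo_vec_near (I J : finType) (h : (I -> C) -> (J -> C)) (z : I -> C) : Prop :=
  forall j, holo_near (fun w => h w j) z.

Definition holo1_near (f : C -> C) (t0 : C) : Prop :=
  exists d : C, 0 < d /\ forall t, `|t - t0| < d ->
    exists c : C, forall e : C, 0 < e -> exists r : C, 0 < r /\
      forall s : C, `|s| < r -> `|f (t + s) - f t - c * s| <= e * `|s|.

Definition analytic_set (I : finType) (X : (I -> C) -> Prop) : Prop :=
  forall a, X a -> exists d : C, 0 < d /\ exists k : nat, exists g : 'I_k -> (I -> C) -> C,
    (forall j w, polydisc a d w -> cdiff_at (g j) w) /\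
    (forall w, polydisc a d w -> (X w <-> forall j, g j w = 0)).

(* two representatives define the same germ of O_{X,x}^J: they agree on X near x *)
Definition germ_eq (I J : finType) (X : (I -> C) -> Prop) (x : I -> C)
    (h1 h2 : (I -> C) -> (J -> C)) : Prop :=
  exists d : C, 0 < d /\ forall w, polydisc x d w -> X w -> h1 w = h2 w.

(* S (a set of representatives) is an O_{X,x}-submodule of O_{X,x}^J *)
Definition is_submodule (I J : finType) (X : (I -> C) -> Prop) (x : I -> C)
    (S : ((I -> C) -> (J -> C)) -> Prop) : Prop :=
  [/\ forall h, S h -> holo_vec_near h x,
      S (fun _ _ => 0),
      forall h1 h2, S h1 -> S h2 -> S (fun w j => h1 w j + h2 w j),
      forall (a : (I -> C) -> C) h, holo_near a x -> S h -> S (fun w j => a w * h w j)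
    & forall h h', S h -> holo_vec_near h' x -> germ_eq X x h h' -> S h'].

Definition curve_germ (I : finType) (X : (I -> C) -> Prop) (x : I -> C) (phi : C -> I -> C) : Prop :=
  [/\ phi 0 = x,
      forall i, holo1_near (fun t => phi t i) 0
    & exists d : C, 0 < d /\ forall t, `|t| < d -> X (phi t)].

(* integral closure of a submodule N of O_{X,x}^J, defined by the curve criterion:
   h is in the closure iff phi^* h lies in the O_{C,0}-module phi^* N for every curve phi *)
Definition int_closure (I J : finType) (X : (I -> C) -> Prop) (x : I -> C)
    (N : ((I -> C) -> (J -> C)) -> Prop) (h : (I -> C) -> (J -> C)) : Prop :=
  holo_vec_near h x /\
  forall phi, curve_germ X x phi ->
    exists k : nat, exists g : 'I_k -> (I -> C) -> (J -> C), exists a : 'I_k -> C -> C,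
      [/\ forall l, N (g l), forall l, holo1_near (a l) 0
        & exists d : C, 0 < d /\ forall t, `|t| < d ->
            forall j, h (phi t) j = \sum_l a l t * g l (phi t) j].

Definition pr1 (I : finType) (z : (I + I)%type -> C) : I -> C := fun i => z (inl i).
Definition pr2 (I : finType) (z : (I + I)%type -> C) : I -> C := fun i => z (inr i).
Definition pt_pair (I : finType) (x y : I -> C) : (I + I)%type -> C :=
  fun k => match k with inl i => x i | inr i => y i end.
Definition prodX (I : finType) (X : (I -> C) -> Prop) : ((I + I)%type -> C) -> Prop :=
  fun z => X (pr1 z) /\ X (pr2 z).

Definition double (I J : finType) (h : (I -> C) -> (J -> C)) :
    ((I + I)%type -> C) -> ((J + J)%type -> C) :=
  fun z k => match k with inl j => h (pr1 z) j | inr j => h (pr2 z) j end.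

(* stalk at (x,x) of M_D: the O_{XxX,(x,x)}-module generated by the h_D, h in M_x *)
Definition double_mod (I J : finType) (x : I -> C) (Mx : ((I -> C) -> (J -> C)) -> Prop) :
    (((I + I)%type -> C) -> ((J + J)%type -> C)) -> Prop :=
  fun H => exists k : nat, exists b : 'I_k -> ((I + I)%type -> C) -> C,
    exists g : 'I_k -> (I -> C) -> (J -> C),
      [/\ forall l, holo_near (b l) (pt_pair x x), forall l, Mx (g l)
        & H = fun z q => \sum_l b l z * double (g l) z q].

Definition lip_sat (I J : finType) (X : (I -> C) -> Prop) (x : I -> C)
    (Mx : ((I -> C) -> (J -> C)) -> Prop) (h : (I -> C) -> (J -> C)) : Prop :=
  holo_vec_near h x /\
  int_closure (prodX X) (pt_pair x x) (double_mod x Mx) (double h).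

End Analytic.

From Pilot Require Import Defs.
From HB Require Import structures.
From mathcomp Require Import all_boot all_order all_algebra.
From mathcomp Require Import reals complex ring.
From Stdlib Require Import FunctionalExtensionality.
Set Implicit Arguments. Unset Strict Implicit. Unset Printing Implicit Defensive.
Import Order.TTheory GRing.Theory Num.Theory.
Local Open Scope ring_scope.

(** The closure properties of M_{S_1} and the inclusion of M_x are formal once one knows
    that the pullback phi^*N of a module along a curve phi is closed under sums and under
    maps that act linearly on values.  Restricting a curve phi in X to the diagonal curve
    (phi, phi) in X x X and reading off the first components shows that M_{S_1} lies in
    the integral closure of M_x.  Closure under multiplication by a holomorphic a rests
    on (a h)_D = (a o pi_1) h_D + (0, (a o pi_2 - a o pi_1) h o pi_2): along a curve phi
    in X x X the first term lies in phi^*M_D, and since h is already integral over M_x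
    along pi_2 o phi, the second is a combination of the elements
    (0, (a o pi_2 - a o pi_1) g o pi_2) = (a g)_D - (a o pi_1) g_D of M_D.  The only
    analytic input is that holomorphic germs form a ring stable under linear changes of
    variables, proved from the epsilon-delta definition of complex differentiability. *)

Definition ord_cat (T : Type) (k1 k2 : nat) (f1 : 'I_k1 -> T) (f2 : 'I_k2 -> T)
    (l : 'I_(k1 + k2)) : T :=
  match split l with inl l1 => f1 l1 | inr l2 => f2 l2 end.

Lemma ord_catP (T : Type) (P : T -> Prop) k1 k2 (f1 : 'I_k1 -> T) (f2 : 'I_k2 -> T) :
  (forall l, P (f1 l)) -> (forall l, P (f2 l)) -> forall l, P (ord_cat f1 f2 l).
Proof. by move=> P1 P2 l; rewrite /ord_cat; case: (split l). Qed.

Lemma big_ord_cat (V : nmodType) (A B : Type) (F : A -> B -> V) k1 k2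
    (a1 : 'I_k1 -> A) (a2 : 'I_k2 -> A) (b1 : 'I_k1 -> B) (b2 : 'I_k2 -> B) :
  \sum_(l < k1 + k2) F (ord_cat a1 a2 l) (ord_cat b1 b2 l) =
  \sum_(l < k1) F (a1 l) (b1 l) + \sum_(l < k2) F (a2 l) (b2 l).
Proof.
rewrite big_split_ord /ord_cat; congr (_ + _); apply: eq_bigr => l _.
  by rewrite (unsplitK (inl l)).
by rewrite (unsplitK (inr l)).
Qed.

Section Holomorphy.
Variable R : realType.
Local Notation C := R[i].

Lemma exists_pos_le2 (a b : C) : 0 < a -> 0 < b ->
  exists m : C, [/\ 0 < m, m <= a & m <= b].
Proof.
move=> a0 b0; case/orP: (real_leVge (gtr0_real a0) (gtr0_real b0)) => ab.
  by exists a; rewrite lexx.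
by exists b; rewrite lexx.
Qed.

Lemma exists_pos_le_fin (I : finType) (P : I -> C -> Prop) :
  (forall i r r', 0 < r' -> r' <= r -> P i r -> P i r') ->
  (forall i, exists r, 0 < r /\ P i r) -> exists r, 0 < r /\ forall i, P i r.
Proof.
move=> Pmono Pex.
suff [r [r0 Pr]] : exists r, 0 < r /\ forall i, i \in enum I -> P i r.
  by exists r; split=> // i; apply: Pr; rewrite mem_enum.
elim: (enum I) => [|a s [r [r0 Pr]]]; first by exists 1.
have [ra [ra0 Pa]] := Pex a.
have [m [m0 mr mra]] := exists_pos_le2 r0 ra0.
exists m; split=> // i; rewrite in_cons => /orP [/eqP->|iis].
  exact: Pmono Pa.
exact: Pmono (Pr i iis).
Qed.

Definition near_zero (I : finType) (P : (I -> C) -> Prop) : Prop :=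
  exists d : C, 0 < d /\ forall h, (forall i, `|h i| < d) -> P h.

Lemma near_zero_and (I : finType) (P Q : (I -> C) -> Prop) :
  near_zero P -> near_zero Q -> near_zero (fun h => P h /\ Q h).
Proof.
move=> [d1 [d10 P1]] [d2 [d20 Q2]]; have [d [d0 dd1 dd2]] := exists_pos_le2 d10 d20.
exists d; split=> // h hd; split.
  by apply: P1 => i; exact: lt_le_trans (hd i) dd1.
by apply: Q2 => i; exact: lt_le_trans (hd i) dd2.
Qed.

Lemma near_zero_mono (I : finType) (P Q : (I -> C) -> Prop) :
  (forall h, P h -> Q h) -> near_zero P -> near_zero Q.
Proof. by move=> PQ [d [d0 Pd]]; exists d; split=> // h /Pd /PQ. Qed.

Lemma sum_norm_ge0 (I : finType) (h : I -> C) : 0 <= \sum_i `|h i|.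
Proof. by apply: sumr_ge0 => i _; exact: normr_ge0. Qed.

Lemma near_zero_sum_norm_le (I : finType) (eps : C) : 0 < eps ->
  near_zero (fun h : I -> C => \sum_i `|h i| <= eps).
Proof.
move=> eps0; set N : C := #|I|%:R + 1.
have N0 : 0 < N by rewrite ltr_wpDl ?ler0n.
exists (eps / N); split=> [|h hd]; first by rewrite divr_gt0.
apply: (@le_trans _ _ (\sum_(i : I) eps / N)).
  by apply: ler_sum => i _; exact: ltW.
rewrite sumr_const -mulr_natr mulrAC ler_pdivrMr // ler_wpM2l ?ltW //.
exact: ltr_pwDr ltr01 (lexx _).
Qed.

Lemma norm_lin_le (I : finType) (c h : I -> C) :
  `|\sum_i c i * h i| <= (\sum_i `|c i|) * \sum_i `|h i|.
Proof.
apply: le_trans (ler_norm_sum _ _ _) _; rewrite mulr_suml.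
apply: ler_sum => i _; rewrite normrM ler_wpM2l ?normr_ge0 //.
by rewrite (bigD1 i) //= lerDl sumr_ge0 // => j _; exact: normr_ge0.
Qed.

Definition cderiv_at (I : finType) (f : (I -> C) -> C) (z c : I -> C) : Prop :=
  forall e : C, 0 < e -> near_zero (fun h =>
    `|f (fun i => z i + h i) - f z - \sum_i c i * h i| <= e * \sum_i `|h i|).

Lemma cderiv_const (I : finType) (k : C) (z : I -> C) :
  cderiv_at (fun _ => k) z (fun _ => 0).
Proof.
move=> e e0; exists 1; split=> // h _.
rewrite subrr big1 => [|i _]; last by rewrite mul0r.
by rewrite subr0 normr0 mulr_ge0 ?sum_norm_ge0 // ltW.
Qed.

Lemma cderiv_add (I : finType) (f g : (I -> C) -> C) (z c c' : I -> C) :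
  cderiv_at f z c -> cderiv_at g z c' ->
  cderiv_at (fun w => f w + g w) z (fun i => c i + c' i).
Proof.
move=> Df Dg e e0; have e20 : 0 < e / 2 by rewrite divr_gt0.
apply: near_zero_mono (near_zero_and (Df _ e20) (Dg _ e20)) => h [Bf Bg].
have -> : \sum_i (c i + c' i) * h i = \sum_i c i * h i + \sum_i c' i * h i.
  by rewrite -big_split /=; apply: eq_bigr => i _; rewrite mulrDl.
have -> : f (fun i => z i + h i) + g (fun i => z i + h i) - (f z + g z) -
    (\sum_i c i * h i + \sum_i c' i * h i) =
    (f (fun i => z i + h i) - f z - \sum_i c i * h i) +
    (g (fun i => z i + h i) - g z - \sum_i c' i * h i) by ring.
rewrite [e]splitr mulrDl; apply: le_trans (ler_normD _ _) _.
exact: lerD.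
Qed.

Lemma cderiv_lipschitz (I : finType) (f : (I -> C) -> C) (z c : I -> C) :
  cderiv_at f z c -> near_zero (fun h =>
    `|f (fun i => z i + h i) - f z| <= (1 + \sum_i `|c i|) * \sum_i `|h i|).
Proof.
move=> Df; apply: near_zero_mono (Df _ ltr01) => h B.
rewrite -(subrK (\sum_i c i * h i) (_ - f z)) mulrDl.
by apply: le_trans (ler_normD _ _) _; rewrite lerD ?norm_lin_le.
Qed.

Lemma cderiv_mul (I : finType) (f g : (I -> C) -> C) (z c c' : I -> C) :
  cderiv_at f z c -> cderiv_at g z c' ->
  cderiv_at (fun w => f w * g w) z (fun i => f z * c' i + g z * c i).
Proof.
move=> Df Dg e e0; set F := f z; set G := g z.
set Kf := 1 + \sum_i `|c i|; set Kg := 1 + \sum_i `|c' i|.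
have Kf0 : 0 < Kf by rewrite ltr_wpDr ?sum_norm_ge0.
have Kg0 : 0 < Kg by rewrite ltr_wpDr ?sum_norm_ge0.
have e20 : 0 < e / 2 by rewrite divr_gt0.
have A0 : 0 < 1 + `|F| + `|G| by rewrite -addrA ltr_wpDr ?addr_ge0.
set e1 := e / 2 / (1 + `|F| + `|G|); have e10 : 0 < e1 by rewrite divr_gt0.
set r := e / 2 / (Kf * Kg); have r0 : 0 < r by rewrite divr_gt0 // mulr_gt0.
apply: near_zero_mono (near_zero_and
    (near_zero_and (Df _ e10) (Dg _ e10))
    (near_zero_and (near_zero_and (cderiv_lipschitz Df) (cderiv_lipschitz Dg))
                   (near_zero_sum_norm_le _ r0))) => h [[Bf Bg] [[Lf Lg] Sr]].
move: Bf Bg Lf Lg Sr; set S := \sum_i `|h i|; have S0 : 0 <= S := sum_norm_ge0 h.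
set fh := f _; set gh := g _; set Lc := \sum_i c i * h i; set Lc' := \sum_i c' i * h i.
move=> Bf Bg Lf Lg Sr.
have -> : fh * gh - F * G - \sum_i (F * c' i + G * c i) * h i =
    ((fh - F - Lc) * G + F * (gh - G - Lc')) + (fh - F) * (gh - G).
  have -> : \sum_i (F * c' i + G * c i) * h i = F * Lc' + G * Lc.
    by rewrite /Lc /Lc' !mulr_sumr -big_split /=; apply: eq_bigr => i _; ring.
  ring.
have T1 : `|(fh - F - Lc) * G + F * (gh - G - Lc')| <= e / 2 * S.
  apply: le_trans (ler_normD _ _) _; rewrite !normrM.
  apply: (@le_trans _ _ (e1 * (`|F| + `|G|) * S)).
    have -> : e1 * (`|F| + `|G|) * S = e1 * S * `|G| + `|F| * (e1 * S) by ring.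
    by apply: lerD; [apply: ler_wpM2r | apply: ler_wpM2l]; rewrite ?normr_ge0.
  rewrite ler_wpM2r // /e1 mulrAC ler_pdivrMr // ler_wpM2l ?ltW //.
  by rewrite -addrA ltrDr ltr01.
have T2 : `|(fh - F) * (gh - G)| <= e / 2 * S.
  rewrite normrM; apply: (@le_trans _ _ (Kf * S * (Kg * S))).
    by rewrite ler_pM ?normr_ge0.
  rewrite mulrACA [e / 2](_ : _ = Kf * Kg * r); last first.
    by rewrite /r [RHS]mulrC divfK ?gt_eqF ?mulr_gt0.
  rewrite -[leRHS]mulrA; apply: ler_wpM2l; first by rewrite mulr_ge0 ?ltW.
  exact: ler_wpM2r.
by rewrite [e]splitr [leRHS]mulrDl (le_trans (ler_normD _ _)) ?lerD.
Qed.

Lemma cderiv_comp (I I' : finType) (s : I -> I') (f : (I -> C) -> C) (z : I' -> C)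
    (c : I -> C) :
  cderiv_at f (fun i => z (s i)) c ->
  cderiv_at (fun w => f (fun i => w (s i))) z (fun j => \sum_(i | s i == j) c i).
Proof.
move=> Df e e0; set N : C := #|I|%:R + 1.
have N0 : 0 < N by rewrite ltr_wpDl ?ler0n.
have [d [d0 Hd]] := Df (e / N) (divr_gt0 e0 N0).
exists d; split=> // h hd.
have := Hd (fun i => h (s i)) (fun i => hd (s i)).
have -> : \sum_j (\sum_(i | s i == j) c i) * h j = \sum_i c i * h (s i).
  rewrite [RHS](partition_big s xpredT) //=; apply: eq_bigr => j _.
  by rewrite mulr_suml; apply: eq_bigr => i /eqP ->.
move/le_trans; apply.
have -> : e * \sum_j `|h j| = e / N * (N * \sum_j `|h j|) by rewrite mulrA divfK ?gt_eqF.
apply: ler_wpM2l; first by rewrite divr_ge0 ?ltW.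
apply: (@le_trans _ _ (\sum_(i : I) \sum_j `|h j|)).
  apply: ler_sum => i _; rewrite (bigD1 (s i)) //= lerDl.
  by apply: sumr_ge0 => j _; exact: normr_ge0.
rewrite sumr_const -mulr_natl ler_wpM2r ?sum_norm_ge0 //.
by rewrite /N lerDl ler01.
Qed.

Lemma holo_near2 (I : finType) (f g F : (I -> C) -> C) (z : I -> C) :
  (forall w, cdiff_at f w -> cdiff_at g w -> cdiff_at F w) ->
  holo_near f z -> holo_near g z -> holo_near F z.
Proof.
move=> fgF [d1 [d10 H1]] [d2 [d20 H2]]; have [d [d0 dd1 dd2]] := exists_pos_le2 d10 d20.
exists d; split=> // w wd; apply: fgF.
  by apply: H1 => i; exact: lt_le_trans (wd i) dd1.
by apply: H2 => i; exact: lt_le_trans (wd i) dd2.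
Qed.

Lemma holo_const (I : finType) (k : C) (z : I -> C) : holo_near (fun _ => k) z.
Proof. by exists 1; split=> // w _; exists (fun _ => 0); exact: cderiv_const. Qed.

Lemma holo_add (I : finType) (f g : (I -> C) -> C) (z : I -> C) :
  holo_near f z -> holo_near g z -> holo_near (fun w => f w + g w) z.
Proof.
apply: holo_near2 => w [c Df] [c' Dg].
by exists (fun i => c i + c' i); exact: cderiv_add Df Dg.
Qed.

Lemma holo_mul (I : finType) (f g : (I -> C) -> C) (z : I -> C) :
  holo_near f z -> holo_near g z -> holo_near (fun w => f w * g w) z.
Proof.
apply: holo_near2 => w [c Df] [c' Dg].
by exists (fun i => f w * c' i + g w * c i); exact: cderiv_mul Df Dg.
Qed.

Lemma holo_opp (I : finType) (f : (I -> C) -> C) (z : I -> C) :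
  holo_near f z -> holo_near (fun w => - f w) z.
Proof.
have -> : (fun w => - f w) = (fun w => (fun _ => -1) w * f w).
  by apply: functional_extensionality => w; rewrite mulN1r.
exact/holo_mul/holo_const.
Qed.

Lemma holo_comp (I I' : finType) (s : I -> I') (f : (I -> C) -> C) (z : I' -> C) :
  holo_near f (fun i => z (s i)) -> holo_near (fun w => f (fun i => w (s i))) z.
Proof.
move=> [d [d0 Hd]]; exists d; split=> // w wd.
have [c Df] := Hd _ (fun i => wd (s i)).
by exists (fun j => \sum_(i | s i == j) c i); exact: (@cderiv_comp _ _ s f w c Df).
Qed.

Lemma holo1_const (k : C) : holo1_near (fun _ => k) 0.
Proof.
exists 1; split=> // t _; exists 0 => e e0; exists 1; split=> // s _.
by rewrite subrr mul0r subr0 normr0 mulr_ge0 ?normr_ge0 ?ltW.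
Qed.

Lemma holo1_cont0 (f : C -> C) : holo1_near f 0 ->
  forall d : C, 0 < d -> exists r : C, 0 < r /\ forall t, `|t| < r -> `|f t - f 0| < d.
Proof.
move=> [d1 [d10 Hd1]] d d0.
have /Hd1 [c Dc] : `|0 - 0 : C| < d1 by rewrite subrr normr0.
have [r [r0 Hr]] := Dc 1 ltr01.
have c1 : 0 < 1 + `|c| by rewrite ltr_wpDr.
have [m [m0 mr md]] := exists_pos_le2 r0 (divr_gt0 d0 c1).
exists m; split=> // t tm.
have := Hr t (lt_le_trans tm mr); rewrite add0r mul1r => B.
rewrite -(subrK (c * t) (f t - f 0)); apply: le_lt_trans (ler_normD _ _) _.
rewrite normrM; apply: le_lt_trans (lerD B (lexx _)) _.
rewrite -[X in X + _]mul1r -mulrDl mulrC -ltr_pdivlMr //.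
exact: lt_le_trans tm md.
Qed.

Lemma curve_germ_polydisc (I : finType) (Y : (I -> C) -> Prop) (y : I -> C) phi :
  curve_germ Y y phi -> forall d : C, 0 < d ->
  exists r : C, 0 < r /\ forall t, `|t| < r -> polydisc y d (phi t).
Proof.
move=> [phi0 Hphi _] d d0.
suff [r [r0 Hr]] : exists r : C, 0 < r /\ forall k t, `|t| < r -> `|phi t k - y k| < d.
  by exists r; split=> // t tr k; exact: Hr.
apply: (@exists_pos_le_fin I (fun k r => forall t, `|t| < r -> `|phi t k - y k| < d)).
  by move=> k r r' _ rr H t tr; apply: H; exact: lt_le_trans tr rr.
move=> k; have [r [r0 Hr]] := holo1_cont0 (Hphi k) d0.
by exists r; split=> // t /Hr; rewrite phi0.
Qed.

Lemma curve_germ_diag (I : finType) (X : (I -> C) -> Prop) (x : I -> C) phi :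
  curve_germ X x phi ->
  curve_germ (prodX X) (pt_pair x x) (fun t => pt_pair (phi t) (phi t)).
Proof.
move=> [phi0 Hphi [d [d0 Xphi]]]; split.
- by rewrite phi0.
- by case=> i; exact: Hphi.
- by exists d; split=> // t td; split; exact: Xphi.
Qed.

Lemma curve_germ_pr2 (I : finType) (X : (I -> C) -> Prop) (x : I -> C) phi :
  curve_germ (prodX X) (pt_pair x x) phi -> curve_germ X x (fun t => pr2 (phi t)).
Proof.
move=> [phi0 Hphi [d [d0 Xphi]]]; split.
- by rewrite phi0.
- by move=> i; exact: (Hphi (inr i)).
- by exists d; split=> // t /Xphi [].
Qed.

End Holomorphy.

Section Pullback.
Variable R : realType.
Local Notation C := R[i].

Definition pullback_mem (A J : Type) (N : (A -> J -> C) -> Prop) (phi : C -> A)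
    (F : C -> J -> C) : Prop :=
  exists k : nat, exists g : 'I_k -> A -> J -> C, exists a : 'I_k -> C -> C,
    [/\ forall l, N (g l), forall l, holo1_near (a l) 0
      & exists d : C, 0 < d /\ forall t, `|t| < d ->
          forall j, F t j = \sum_l a l t * g l (phi t) j].

Lemma int_closureP (I J : finType) (X : (I -> C) -> Prop) (x : I -> C)
    (N : ((I -> C) -> J -> C) -> Prop) (h : (I -> C) -> J -> C) :
  int_closure X x N h <->
  holo_vec_near h x /\
  forall phi, curve_germ X x phi -> pullback_mem N phi (fun t => h (phi t)).
Proof. exact: iff_refl. Qed.

Lemma pullback_mem0 (A J : Type) (N : (A -> J -> C) -> Prop) (phi : C -> A) :
  pullback_mem N phi (fun _ _ => 0).
Proof.
exists 0%N, (fun _ _ _ => 0), (fun _ _ => 0); split; try by case.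
by exists 1; split=> // t _ j; rewrite big_ord0.
Qed.

Lemma pullback_mem_gen (A J : Type) (N : (A -> J -> C) -> Prop) (phi : C -> A) g :
  N g -> pullback_mem N phi (fun t => g (phi t)).
Proof.
move=> Ng; exists 1%N, (fun _ => g), (fun _ _ => 1); split=> // [_|].
  exact: holo1_const.
by exists 1; split=> // t _ j; rewrite big_ord1 mul1r.
Qed.

Lemma pullback_mem_eq_near (A J : Type) (N : (A -> J -> C) -> Prop) (phi : C -> A)
    (F G : C -> J -> C) :
  pullback_mem N phi F ->
  (exists d : C, 0 < d /\ forall t, `|t| < d -> forall j, G t j = F t j) ->
  pullback_mem N phi G.
Proof.
move=> [k [g [a [Ng Ha [d1 [d10 H1]]]]]] [d2 [d20 H2]].
exists k, g, a; split=> //; have [d [d0 dd1 dd2]] := exists_pos_le2 d10 d20.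
exists d; split=> // t td j.
by rewrite H2 ?H1 //; [exact: lt_le_trans td dd1 | exact: lt_le_trans td dd2].
Qed.

Lemma pullback_memD (A J : Type) (N : (A -> J -> C) -> Prop) (phi : C -> A)
    (F1 F2 : C -> J -> C) :
  pullback_mem N phi F1 -> pullback_mem N phi F2 ->
  pullback_mem N phi (fun t j => F1 t j + F2 t j).
Proof.
move=> [k1 [g1 [a1 [Ng1 Ha1 [d1 [d10 H1]]]]]] [k2 [g2 [a2 [Ng2 Ha2 [d2 [d20 H2]]]]]].
exists (k1 + k2)%N, (ord_cat g1 g2), (ord_cat a1 a2).
split; [exact: (ord_catP (P := N)) |
       exact: (ord_catP (P := fun f : C -> C => holo1_near f 0)) |].
have [d [d0 dd1 dd2]] := exists_pos_le2 d10 d20.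
exists d; split=> // t td j.
rewrite (big_ord_cat (fun a g => a t * g (phi t) j)) H1 ?H2 //.
  exact: lt_le_trans td dd2.
exact: lt_le_trans td dd1.
Qed.

Lemma pullback_mem_map (A J A' J' : Type) (N : (A -> J -> C) -> Prop)
    (N' : (A' -> J' -> C) -> Prop) (psi : C -> A) (phi : C -> A') (F : C -> J -> C)
    (T : (A -> J -> C) -> A' -> J' -> C) (L : C -> (J -> C) -> J' -> C) :
  (forall g, N g -> N' (T g)) ->
  (forall g t q, T g (phi t) q = L t (g (psi t)) q) ->
  (forall t k (a : 'I_k -> C) (v : 'I_k -> J -> C) q,
     L t (fun j => \sum_l a l * v l j) q = \sum_l a l * L t (v l) q) ->
  pullback_mem N psi F -> pullback_mem N' phi (fun t => L t (F t)).
Proof.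
move=> NT TL Llin [k [g [a [Ng Ha [d [d0 H]]]]]].
exists k, (fun l => T (g l)), a; split=> // [l|]; first exact: NT.
exists d; split=> // t td q.
have -> : F t = fun j => \sum_l a l t * g l (psi t) j.
  by apply: functional_extensionality => j; exact: H.
by rewrite Llin; apply: eq_bigr => l _; rewrite TL.
Qed.

Lemma holo_double (I J : finType) (h : (I -> C) -> J -> C) (x : I -> C) :
  holo_vec_near h x -> holo_vec_near (Defs.double h) (pt_pair x x).
Proof.
move=> hx [j|j].
  exact: (@holo_comp R I (I + I)%type inl (fun w => h w j) (pt_pair x x) (hx j)).
exact: (@holo_comp R I (I + I)%type inr (fun w => h w j) (pt_pair x x) (hx j)).
Qed.

Lemma holo_diag (I : finType) (b : ((I + I)%type -> C) -> C) (x : I -> C) :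
  holo_near b (pt_pair x x) -> holo_near (fun w => b (pt_pair w w)) x.
Proof.
pose s (k : (I + I)%type) := match k with inl i => i | inr i => i end.
have pt_pair_s (w : I -> C) : pt_pair w w = (fun k => w (s k)).
  by apply: functional_extensionality => -[].
rewrite pt_pair_s => bx.
have -> : (fun w => b (pt_pair w w)) = (fun w => b (fun k => w (s k))).
  by apply: functional_extensionality => w; rewrite pt_pair_s.
exact: holo_comp.
Qed.

Section DoubleModule.
Variables (I J : finType) (X : (I -> C) -> Prop) (x : I -> C)
  (Mx : ((I -> C) -> J -> C) -> Prop).

Lemma double_mod_double g : Mx g -> double_mod x Mx (Defs.double g).
Proof.
move=> Mg; exists 1%N, (fun _ _ => 1), (fun _ => g); split=> // [_|].
  exact: holo_const.
apply: functional_extensionality => z; apply: functional_extensionality => q.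
by rewrite big_ord1 mul1r.
Qed.

Lemma double_mod_scale b G : holo_near b (pt_pair x x) -> double_mod x Mx G ->
  double_mod x Mx (fun z q => b z * G z q).
Proof.
move=> bx [k [c [g [cx Mg ->]]]].
exists k, (fun l z => b z * c l z), g; split=> // [l|]; first exact: holo_mul.
apply: functional_extensionality => z; apply: functional_extensionality => q.
by rewrite mulr_sumr; apply: eq_bigr => l _; rewrite mulrA.
Qed.

Lemma double_modD G1 G2 : double_mod x Mx G1 -> double_mod x Mx G2 ->
  double_mod x Mx (fun z q => G1 z q + G2 z q).
Proof.
move=> [k1 [b1 [g1 [bx1 Mg1 ->]]]] [k2 [b2 [g2 [bx2 Mg2 ->]]]].
exists (k1 + k2)%N, (ord_cat b1 b2), (ord_cat g1 g2).
split; [exact: (ord_catP (P := fun b => holo_near b (pt_pair x x))) |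
       exact: (ord_catP (P := Mx)) |].
apply: functional_extensionality => z; apply: functional_extensionality => q.
by rewrite (big_ord_cat (fun b g => b z * Defs.double g z q)).
Qed.

Hypothesis Mx_sub : is_submodule X x Mx.

Lemma submodule_sum k (b : 'I_k -> (I -> C) -> C) (g : 'I_k -> (I -> C) -> J -> C) :
  (forall l, holo_near (b l) x) -> (forall l, Mx (g l)) ->
  Mx (fun w j => \sum_l b l w * g l w j).
Proof.
have [_ M0 MD MZ _] := Mx_sub.
elim: k b g => [|k IHk] b g bx Mg.
  have -> : (fun w j => \sum_(l < 0) b l w * g l w j) = (fun _ _ => 0) by
    apply: functional_extensionality => w; apply: functional_extensionality => j;
    rewrite big_ord0.
  exact: M0.
have -> : (fun w j => \sum_(l < k.+1) b l w * g l w j) =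
   (fun w j => \sum_(l < k) b (widen_ord (leqnSn k) l) w * g (widen_ord (leqnSn k) l) w j
               + b ord_max w * g ord_max w j).
  apply: functional_extensionality => w; apply: functional_extensionality => j.
  by rewrite big_ord_recr.
by apply: MD; [apply: IHk | apply: MZ].
Qed.

Lemma double_mod_diag G : double_mod x Mx G -> Mx (fun w j => G (pt_pair w w) (inl j)).
Proof.
move=> [k [b [g [bx Mg ->]]]].
by apply: (submodule_sum (b := fun l w => b l (pt_pair w w))) => // l; exact: holo_diag.
Qed.

(* [(a g)_D - (a o pr1) g_D]: the gap between doubling [a g] and scaling [g_D]. *)
Definition double_skew (a : (I -> C) -> C) (g : (I -> C) -> J -> C) :
    ((I + I)%type -> C) -> (J + J)%type -> C :=
  fun z q => match q with inl _ => 0 | inr j => (a (pr2 z) - a (pr1 z)) * g (pr2 z) j end.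

Lemma double_mod_skew a g : holo_near a x -> Mx g -> double_mod x Mx (double_skew a g).
Proof.
have [_ _ _ MZ _] := Mx_sub; move=> ax Mg.
have a1x : holo_near (fun z : (I + I)%type -> C => - a (pr1 z)) (pt_pair x x).
  exact/holo_opp/(@holo_comp R I (I + I)%type inl a (pt_pair x x)).
have := double_modD (double_mod_double (MZ _ _ ax Mg))
                    (double_mod_scale a1x (double_mod_double Mg)).
congr double_mod; apply: functional_extensionality => z.
by apply: functional_extensionality => -[j|j] /=; ring.
Qed.

End DoubleModule.

Section Saturation.
Variables (I J : finType) (X : (I -> C) -> Prop) (x : I -> C)
  (Mx : ((I -> C) -> J -> C) -> Prop).
Hypothesis Mx_sub : is_submodule X x Mx.

Lemma lip_sat_int_closure h : lip_sat X x Mx h -> int_closure X x Mx h.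
Proof.
move=> [hx /int_closureP [_ hD]]; apply/int_closureP; split=> // phi phiX.
apply: (pullback_mem_map (T := fun G w j => G (pt_pair w w) (inl j))
          (L := fun _ v j => v (inl j)) _ _ _ (hD _ (curve_germ_diag phiX))) => //.
exact: double_mod_diag Mx_sub.
Qed.

Lemma lip_sat_of_mem h : Mx h -> lip_sat X x Mx h.
Proof.
have [Mhol _ _ _ _] := Mx_sub; move=> Mh; split; first exact: Mhol.
apply/int_closureP; split=> [|phi _]; first exact/holo_double/Mhol.
exact/pullback_mem_gen/double_mod_double.
Qed.

Lemma lip_sat0 : lip_sat X x Mx (fun _ _ => 0).
Proof.
split=> [j|]; first exact: holo_const.
apply/int_closureP; split=> [[j|j]|phi _]; try exact: holo_const.
apply: pullback_mem_eq_near (pullback_mem0 _ _) _.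
by exists 1; split=> // t _ [].
Qed.

Lemma lip_satD h1 h2 : lip_sat X x Mx h1 -> lip_sat X x Mx h2 ->
  lip_sat X x Mx (fun w j => h1 w j + h2 w j).
Proof.
move=> [h1x /int_closureP [_ h1D]] [h2x /int_closureP [_ h2D]].
have hx : holo_vec_near (fun w j => h1 w j + h2 w j) x by move=> j; exact: holo_add.
split=> //; apply/int_closureP; split=> [|phi phiX]; first exact: holo_double.
apply: pullback_mem_eq_near (pullback_memD (h1D _ phiX) (h2D _ phiX)) _.
by exists 1; split=> // t _ [].
Qed.

(* (a h)_D = (a o pr1) h_D + double_skew a h *)
Lemma lip_satZ a h : holo_near a x -> lip_sat X x Mx h ->
  lip_sat X x Mx (fun w j => a w * h w j).
Proof.
move=> ax hS; have [hx /int_closureP [_ hD]] := hS.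
have /int_closureP [_ hC] := lip_sat_int_closure hS.
have ahx : holo_vec_near (fun w j => a w * h w j) x by move=> j; exact: holo_mul.
split=> //; apply/int_closureP; split=> [|phi phiX]; first exact: holo_double.
have a1x : holo_near (fun z => a (pr1 z)) (pt_pair x x).
  exact: (@holo_comp R I (I + I)%type inl a (pt_pair x x)).
have scaled : pullback_mem (double_mod x Mx) phi
    (fun t q => a (pr1 (phi t)) * Defs.double h (phi t) q).
  apply: (pullback_mem_map (T := fun G z q => a (pr1 z) * G z q)
                           (L := fun t v q => a (pr1 (phi t)) * v q) _ _ _ (hD _ phiX)) => //.
    by move=> G; exact: double_mod_scale.
  by move=> t k b v q; rewrite mulr_sumr; apply: eq_bigr => l _; rewrite mulrCA.
have skewed : pullback_mem (double_mod x Mx) phi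
    (fun t => double_skew a (fun _ => h (pr2 (phi t))) (phi t)).
  apply: (pullback_mem_map (T := double_skew a)
            (L := fun t v => double_skew a (fun _ => v) (phi t)) _ _ _
            (hC _ (curve_germ_pr2 phiX))) => //.
    by move=> g Mg; exact (double_mod_skew Mx_sub ax Mg).
  move=> t k b v [j|j] /=; first by rewrite big1 // => l _; rewrite mulr0.
  by rewrite mulr_sumr; apply: eq_bigr => l _; rewrite mulrCA.
apply: pullback_mem_eq_near (pullback_memD scaled skewed) _.
by exists 1; split=> // t _ [j|j] /=; ring.
Qed.

Lemma lip_sat_germ h h' : lip_sat X x Mx h -> holo_vec_near h' x -> germ_eq X x h h' ->
  lip_sat X x Mx h'.
Proof.
move=> [hx /int_closureP [_ hD]] h'x [d [d0 hh']].
split=> //; apply/int_closureP; split=> [|phi phiX]; first exact: holo_double.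
apply: pullback_mem_eq_near (hD _ phiX) _.
have [r [r0 phid]] := curve_germ_polydisc phiX d0.
have [_ _ [dX [dX0 phiXX]]] := phiX.
have [m [m0 mr mX]] := exists_pos_le2 r0 dX0.
exists m; split=> // t tm.
have pd := phid t (lt_le_trans tm mr).
have [X1 X2] := phiXX t (lt_le_trans tm mX).
case=> j /=; rewrite hh' //.
  by move=> i; exact: (pd (inl i)).
by move=> i; exact: (pd (inr i)).
Qed.

End Saturation.

End Pullback.

Theorem mainTheorem1 (R : realType) (n p : nat)
    (X : ('I_n -> R[i]) -> Prop)
    (M : ('I_n -> R[i]) -> ((('I_n -> R[i]) -> ('I_p -> R[i])) -> Prop)) :
  analytic_set X ->
  (forall x, X x -> is_submodule X x (M x)) ->
  forall x, X x ->
    is_submodule X x (lip_sat X x (M x)) /\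
    (forall h, M x h -> lip_sat X x (M x) h) /\
    (forall h, lip_sat X x (M x) h -> int_closure X x (M x) h).
Proof.
move=> _ Msub x Xx; have Mx_sub := Msub x Xx.
split; last split.
- split.
  + by move=> h [].
  + exact: lip_sat0.
  + by move=> h1 h2; exact: lip_satD.
  + by move=> a h; exact: lip_satZ.
  + by move=> h h'; exact: lip_sat_germ.
- by move=> h; exact: lip_sat_of_mem.
- by move=> h; exact: lip_sat_int_closure.
Qed.
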